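(* Let $n,m$ be positive integers, not both equal to $1$, with $n\equiv m \pmod 2$. Then \[\sum_{d=0}^{\min(n,m)}(-1)^{d+1}2^{2d-1}\frac{n+m-2d}{n+m-d}\cdot\frac{n+m-2d-1}{n+m-d-1}\binom{n+m-d}{n-d,\,m-d,\,d}\,C\bigl((n+m)/2-d-1\bigr)=\begin{cases}C(n/2-1)\,C(m/2-1)&\text{if } n,m \text{ are even},\\ 0&\text{if } n,m\text{ are odd.}\end{cases}\]
   Context: $C(j)=\frac{1}{j+1}\binom{2j}{j}$ is the $j$-th Catalan number. $\binom{s}{a,\,b,\,c}=\frac{s!}{a!\,b!\,c!}$ is the multinomial coefficient. A summand containing the factor $n+m-2d=0$ (which occurs only for $d=n=m$) is zero, so the undefined value $C(-1)$ never needs to be evaluated. *)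

From mathcomp Require Import all_boot all_order all_algebra.
Set Implicit Arguments. Unset Strict Implicit. Unset Printing Implicit Defensive.
Import Order.TTheory GRing.Theory Num.Theory.
Local Open Scope ring_scope.

Definition catalan (j : nat) : rat := ('C(j.*2, j))%:R / (j.+1)%:R.

Definition multinom (s a b c : nat) : rat := (s`!)%:R / ((a`! * b`! * c`!)%N)%:R.

From mathcomp Require Import all_boot all_order all_algebra.
From mathcomp Require Import ring lra zify.
Set Implicit Arguments.
Unset Strict Implicit.
Unset Printing Implicit Defensive.

Import Order.TTheory GRing.Theory Num.Theory.
Local Open Scope ring_scope.

(* Write S(n, m) for the sum. For d in range, the summands of S(n, m) and of
   S(n + 2, m) are polynomial multiples of one hypergeometric term in d, and
   creative telescoping (Zeilberger's algorithm) yields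
     (n + 2) S(n + 2, m) = 4 (n - 1) S(n, m)      whenever n + 2 <= m.
   As (k + 2) C(k + 1) = 2 (2k + 1) C(k), this is exactly the recurrence of
   C(n/2 - 1) along even n, started at n = 0, where the single summand gives
   S(0, m) = -C(m/2 - 1) / 2 (formally C(-1) = -1/2); along odd n it
   propagates the value S(1, m) = 0. Symmetry S(n, m) = S(m, n) reduces the
   theorem to n <= m. *)

Lemma natr_factS (R : pzSemiRingType) k : ((k.+1)`!)%:R = k.+1%:R * (k`!)%:R :> R.
Proof. by rewrite factS natrM. Qed.

Lemma natrS (R : pzSemiRingType) k : k.+1%:R = k%:R + 1 :> R.
Proof. by rewrite natr1. Qed.

Lemma natr_fact_neq0 (R : numDomainType) k : (k`!)%:R != 0 :> R.
Proof. by rewrite pnatr_eq0 -lt0n fact_gt0. Qed.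

Lemma catalan_fact j : catalan j = ((2 * j)`!)%:R / ((j`!)%:R * ((j.+1)`!)%:R).
Proof.
have := bin_fact (leq_addl j j); rewrite addnK addnn -mul2n.
move=> /(congr1 (GRing.natmul (1 : rat))).
rewrite /catalan natr_factS -mul2n !natrM => <-; field.
by rewrite natr_fact_neq0 nat1r pnatr_eq0.
Qed.

Lemma multinom_fact s a b c :
  multinom s a b c = (s`!)%:R / ((a`!)%:R * (b`!)%:R * (c`!)%:R).
Proof. by rewrite /multinom !natrM. Qed.

Ltac natr_nonneg :=
  repeat match goal with |- context [?k%:R] =>
    lazymatch goal with
    | _ : is_true (0 <= k%:R) |- _ => fail
    | _ => have ? := ler0n rat k
    end
  end.

Ltac field_nonzero :=
  rewrite ?natr_fact_neq0 /=; repeat (apply/andP; split); try done;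
  natr_nonneg; apply: lt0r_neq0; lra.

Definition csum_term (n m d : nat) : rat :=
  (-1) ^+ d.+1 * (2 ^+ (2 * d) / 2)
  * (((n + m)%:R - 2 * d%:R) / ((n + m)%:R - d%:R))
  * (((n + m)%:R - 2 * d%:R - 1) / ((n + m)%:R - d%:R - 1))
  * multinom (n + m - d) (n - d) (m - d) d
  * catalan ((n + m)./2 - d - 1).

Definition csum (n m : nat) : rat := \sum_(0 <= d < (minn n m).+1) csum_term n m d.

Lemma csumC n m : csum n m = csum m n.
Proof.
rewrite /csum minnC; apply: eq_bigr => d _.
by rewrite /csum_term addnC /multinom (mulnC (n - d)`!).
Qed.

Section Recurrence.

Variables n m s : nat.
(* [1 < s] only excludes (n, m) = (0, 2), where [kernelS] divides by zero. *)
Hypotheses (n2_le_m : (n.+2 <= m)%N) (nm_double : (n + m = 2 * s)%N) (s_gt1 : (1 < s)%N).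

Let term_coef d : rat := (n%:R + 2 - d%:R) * (n%:R + 1 - d%:R) * (s%:R - d%:R).

Let termSS_coef d : rat :=
  2 * (2 * s%:R + 1 - 2 * d%:R) * (2 * s%:R - d%:R) * (2 * s%:R - d%:R - 1).

(* The guard makes [kernel] vanish past the summation range of S(n + 2, m). *)
Definition kernel (d : nat) : rat :=
  if (d <= n.+2)%N && (d <= s)%N then
    (-1) ^+ d.+1 * (2 ^+ (2 * d) / 2) * ((2 * s - 2 * d)`!)%:R * ((2 * s - d - 2)`!)%:R
      / (((n.+2 - d)`!)%:R * ((m - d)`!)%:R * (d`!)%:R * ((s - d)`!)%:R ^+ 2)
  else 0.

Lemma csum_term_kernel d : (d <= n)%N ->
  csum_term n m d = term_coef d * kernel d.
Proof.
move=> le_dn; rewrite /csum_term /term_coef /kernel ifT; last by apply/andP; split; lia.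
have [a ea] : exists a, n = (a + d)%N by exists (n - d)%N; lia.
have [j ej] : exists j, s = (j + d).+1 by exists (s - d.+1)%N; lia.
rewrite nm_double [in (2 * s)./2]mul2n doubleK.
rewrite (_ : 2 * s - d - 2 = 2 * j + d)%N; last by lia.
rewrite (_ : 2 * s - d = (2 * j + d).+2)%N; last by lia.
rewrite (_ : 2 * s - 2 * d = (2 * j).+2)%N; last by lia.
rewrite (_ : s - d - 1 = j)%N; last by lia.
rewrite (_ : s - d = j.+1)%N; last by lia.
rewrite (_ : n.+2 - d = a.+2)%N; last by lia.
rewrite (_ : n - d = a)%N; last by lia.
rewrite multinom_fact catalan_fact !natr_factS ea ej.
by field; field_nonzero.
Qed.

Lemma csum_termSS_kernel d : (d <= n.+2)%N ->
  csum_term n.+2 m d = termSS_coef d * kernel d.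
Proof.
move=> le_dn2; rewrite /csum_term /termSS_coef (_ : n.+2 + m = (2 * s).+2)%N; last by lia.
rewrite (_ : ((2 * s).+2)./2 = s.+1)%N; last by lia.
have [gt_ds | le_ds] := ltnP s d.
  rewrite /kernel ifF; last by apply/negbTE; rewrite negb_and; apply/orP; right; lia.
  have -> : ((2 * s).+2)%:R = 2 * d%:R :> rat.
    by rewrite (_ : (2 * s).+2 = 2 * d)%N ?natrM //; lia.
  by rewrite subrr !(mul0r, mulr0).
rewrite /kernel ifT; last by apply/andP; split; lia.
have [j ej] : exists j, s = (j + d)%N by exists (s - d)%N; lia.
have [w ew] : exists w, (2 * j + d = w.+2)%N by exists (2 * j + d - 2)%N; lia.
rewrite (_ : (2 * s).+2 - d = w.+4)%N; last by lia.
rewrite (_ : 2 * s - d - 2 = w)%N; last by lia.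
rewrite (_ : 2 * s - 2 * d = 2 * j)%N; last by lia.
rewrite (_ : s.+1 - d - 1 = j)%N; last by lia.
rewrite (_ : s - d = j)%N; last by lia.
rewrite multinom_fact catalan_fact !natr_factS ej ?(natrD, natrM, natrS).
have -> : d%:R = w%:R + 2 - 2 * j%:R :> rat.
  by move/(congr1 (fun k => k%:R : rat)): ew; rewrite natrD natrM !natrS => ?; lra.
by field; field_nonzero.
Qed.

Lemma kernelS d : (d < n.+2)%N -> (d < s)%N ->
  kernel d.+1 = -4 * (n%:R + 2 - d%:R) * (m%:R - d%:R) * (s%:R - d%:R) ^+ 2
    / ((2 * s%:R - 2 * d%:R) * (2 * s%:R - 2 * d%:R - 1) * (2 * s%:R - d%:R - 2) * (d%:R + 1))
    * kernel d.
Proof.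
move=> lt_dn2 lt_ds; rewrite /kernel !ifT; try by apply/andP; split; lia.
have [j ej] : exists j, s = (j + d).+1 by exists (s - d.+1)%N; lia.
have [a ea] : exists a, (n.+1 = a + d)%N by exists (n.+1 - d)%N; lia.
have [b eb] : exists b, m = (b + d).+1 by exists (m - d.+1)%N; lia.
have [w ew] : exists w, (2 * j + d = w.+1)%N by exists (2 * j + d - 1)%N; lia.
rewrite (_ : 2 * s - 2 * d.+1 = 2 * j)%N; last by lia.
rewrite (_ : 2 * s - 2 * d = (2 * j).+2)%N; last by lia.
rewrite (_ : 2 * s - d.+1 - 2 = w)%N; last by lia.
rewrite (_ : 2 * s - d - 2 = w.+1)%N; last by lia.
rewrite (_ : n.+2 - d.+1 = a)%N; last by lia.
rewrite (_ : n.+2 - d = a.+1)%N; last by lia.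
rewrite (_ : m - d.+1 = b)%N; last by lia.
rewrite (_ : m - d = b.+1)%N; last by lia.
rewrite (_ : s - d.+1 = j)%N; last by lia.
rewrite (_ : s - d = j.+1)%N; last by lia.
rewrite (_ : 2 * d.+1 = (2 * d).+2)%N; last by lia.
rewrite !exprS !natr_factS ej eb ?(natrD, natrM, natrS).
have -> : n%:R = a%:R + d%:R - 1 :> rat.
  by move/(congr1 (fun k => k%:R : rat)): ea; rewrite natrD !natrS => ?; lra.
have -> : w%:R = 2 * j%:R + d%:R - 1 :> rat.
  by move/(congr1 (fun k => k%:R : rat)): ew; rewrite natrD natrM !natrS => ?; lra.
have jd_ge1 : 1 <= 2 * j%:R + d%:R :> rat by rewrite -natrM -natrD ler1n; lia.
by field; field_nonzero.
Qed.

(* The certificate produced by Zeilberger's algorithm for this recurrence. *)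
Definition certificate d : rat :=
  2 * d%:R * (d%:R - 2 * s%:R + 1) * (2 * d%:R - 2 * s%:R - 1) * (2 * d%:R - 2 * s%:R - n%:R - 2)
  * kernel d.

Lemma kernel_telescoping d : (d <= n.+2)%N ->
  (n%:R + 2) * (termSS_coef d * kernel d) - 4 * (n%:R - 1) * (term_coef d * kernel d)
  = certificate d.+1 - certificate d.
Proof.
move=> le_dn2.
have m_eq : m%:R = 2 * s%:R - n%:R :> rat.
  by move/(congr1 (fun k => k%:R : rat)): nm_double; rewrite natrD natrM => ?; lra.
rewrite /certificate /termSS_coef /term_coef.
have [/andP [lt_dn2 lt_ds] | ] := boolP ((d < n.+2)%N && (d < s)%N).
  rewrite kernelS // m_eq.
  have ? : d%:R + 1 <= s%:R :> rat by rewrite natr1 ler_nat.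
  have ? : 2 <= s%:R :> rat by rewrite (ler_nat rat 2); lia.
  have ? := ler0n rat d.
  by field; field_nonzero.
move=> not_lt; rewrite [kernel d.+1]/kernel (negbTE not_lt) !mulr0 sub0r.
have [lt_sd | le_ds] := ltnP s d.
  by rewrite /kernel ifF ?(mulr0, subrr, oppr0) //; lia.
have [-> | ->] : d = n.+2 \/ d = s by lia.
  by ring.
by ring.
Qed.

Lemma csum_recurrence : (n%:R + 2) * csum n.+2 m = 4 * (n%:R - 1) * csum n m.
Proof.
rewrite /csum (minn_idPl n2_le_m) (minn_idPl (_ : n <= m)%N); last by lia.
have -> : \sum_(0 <= d < n.+3) csum_term n.+2 m d
          = \sum_(0 <= d < n.+3) termSS_coef d * kernel d.
  by apply: eq_big_nat => d /andP [_ ?]; apply: csum_termSS_kernel.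
have -> : \sum_(0 <= d < n.+1) csum_term n m d
          = \sum_(0 <= d < n.+3) term_coef d * kernel d.
  have [coef_n1 coef_n2] : term_coef n.+1 = 0 /\ term_coef n.+2 = 0.
    by split; rewrite /term_coef; ring.
  rewrite [in RHS]big_nat_recr //= [in RHS]big_nat_recr //= coef_n1 coef_n2 !mul0r !addr0.
  by apply: eq_big_nat => d /andP [_ ?]; apply: csum_term_kernel; lia.
apply/eqP; rewrite -subr_eq0 !mulr_sumr -sumrB.
rewrite (eq_big_nat _ _ (F2 := fun d => certificate d.+1 - certificate d)); last first.
  by move=> d /andP [_ ?]; apply: kernel_telescoping.
rewrite telescope_sumr // /certificate (_ : kernel n.+3 = 0); last by rewrite /kernel ltnn.
by rewrite !(mulr0, mul0r, subrr).
Qed.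

End Recurrence.

Lemma catalan0 : catalan 0 = 1.
Proof. by rewrite /catalan /= mul1r invr1. Qed.

Lemma catalanS k : k.+2%:R * catalan k.+1 = 2 * (2 * k%:R + 1) * catalan k.
Proof.
rewrite !catalan_fact (_ : 2 * k.+1 = (2 * k).+2)%N; last by lia.
by rewrite !natr_factS; field; field_nonzero.
Qed.

Lemma csum0 t : (0 < t)%N -> csum 0 (2 * t) = - catalan t.-1 / 2.
Proof.
move=> t_gt0; rewrite /csum /csum_term min0n big_nat1 multinom_fact !subn0.
rewrite (_ : ((2 * t)./2 - 1 = t.-1)%N); last by lia.
have ? : 1 <= t%:R :> rat by rewrite ler1n.
by rewrite add0n muln0 expr0 expr1 fact0; field; field_nonzero.
Qed.

Lemma csum1 t : (0 < t)%N -> csum 1 (2 * t).+1 = 0.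
Proof.
move=> t_gt0.
have m_ge3 : (1.+2 <= (2 * t).+1)%N by lia.
have nm_double : (1 + (2 * t).+1 = 2 * t.+1)%N by lia.
have s_gt1 : (1 < t.+1)%N by [].
rewrite /csum (minn_idPl (_ : 1 <= (2 * t).+1)%N) // big_nat_recr //= big_nat1.
rewrite !(csum_term_kernel m_ge3 nm_double s_gt1) // (kernelS m_ge3 nm_double s_gt1) //=.
have ? : 1 <= t%:R :> rat by rewrite ler1n.
by field; field_nonzero.
Qed.

Lemma csum_odd k t : (0 < t)%N -> (k <= t)%N -> csum (2 * k).+1 (2 * t).+1 = 0.
Proof.
move=> t_gt0; elim: k => [_ | k IH le_kt]; first exact: csum1.
have m_ge : ((2 * k).+3 <= (2 * t).+1)%N by lia.
have nm_double : ((2 * k).+1 + (2 * t).+1 = 2 * (k + t).+1)%N by lia.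
have s_gt1 : (1 < (k + t).+1)%N by lia.
rewrite (_ : (2 * k.+1).+1 = (2 * k).+3)%N; last by lia.
apply: (@mulfI _ ((2 * k).+1%:R + 2)); first by field_nonzero.
by rewrite (csum_recurrence m_ge nm_double s_gt1) IH ?mulr0 //; lia.
Qed.

Lemma csum_even k t : (k < t)%N -> csum (2 * k.+1) (2 * t) = catalan k * catalan t.-1.
Proof.
elim: k => [t_gt0 | k IH lt_kt].
  rewrite catalan0 mul1r; have [t_le1 | t_gt1] := leqP t 1.
    rewrite (_ : t = 1)%N; last by lia.
    by rewrite /csum /csum_term /multinom /catalan /= !big_nat_recr //= big_geq.
  have m_ge : (0.+2 <= 2 * t)%N by lia.
  have nm_double : (0 + 2 * t = 2 * t)%N by [].
  apply: (@mulfI _ (0%:R + 2)); first by field_nonzero.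
  by rewrite muln1 (csum_recurrence m_ge nm_double t_gt1) csum0 //; field.
have m_ge : ((2 * k.+1).+2 <= 2 * t)%N by lia.
have nm_double : (2 * k.+1 + 2 * t = 2 * (k.+1 + t))%N by lia.
have s_gt1 : (1 < k.+1 + t)%N by lia.
rewrite (_ : 2 * k.+2 = (2 * k.+1).+2)%N; last by lia.
apply: (@mulfI _ ((2 * k.+1)%:R + 2)); first by field_nonzero.
rewrite (csum_recurrence m_ge nm_double s_gt1) IH; last by lia.
have -> : ((2 * k.+1)%:R + 2) * (catalan k.+1 * catalan t.-1)
          = 2 * (k.+2%:R * catalan k.+1) * catalan t.-1 by ring.
by rewrite catalanS; ring.
Qed.

Theorem corollary4p2 (n m : nat) :
  (0 < n)%N -> (0 < m)%N -> ~ (n = 1%N /\ m = 1%N) -> odd n = odd m ->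
  \sum_(0 <= d < (minn n m).+1)
     ((-1) ^+ d.+1 * (2 ^+ (2 * d) / 2)
      * (((n + m)%:R - 2 * d%:R) / ((n + m)%:R - d%:R))
      * (((n + m)%:R - 2 * d%:R - 1) / ((n + m)%:R - d%:R - 1))
      * multinom (n + m - d) (n - d) (m - d) d
      * catalan ((n + m)./2 - d - 1) : rat)
  = if ~~ odd n then catalan (n./2 - 1) * catalan (m./2 - 1) else 0.
Proof.
move=> n_gt0 m_gt0 not_11 odd_nm; rewrite -[LHS]/(csum n m).
wlog le_nm : n m n_gt0 m_gt0 not_11 odd_nm / (n <= m)%N.
  move=> wlog_le; have [|lt_mn] := leqP n m; first exact: wlog_le.
  rewrite csumC wlog_le -?odd_nm 1?mulrC //; lia.
case: (boolP (odd n)) => [odd_n | even_n] /=.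
  rewrite (_ : n = (2 * n./2).+1) 1?(_ : m = (2 * m./2).+1); try lia.
  by apply: csum_odd; lia.
rewrite [in csum _ _](_ : n = 2 * (n./2 - 1).+1)%N; last by lia.
rewrite [in csum _ _](_ : m = 2 * m./2)%N; last by lia.
by rewrite csum_even ?subn1 //; lia.
Qed.
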